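(* Let $T:{\mathcal{Q}Sym}\to{\mathcal{Q}Sym}$ be the linear map with $T(F_\alpha)=F_{\tilde\alpha}$ for every composition $\alpha$. Then \[\zeta_+\circ T=\zeta_+\quad\text{and}\quad \zeta_-\circ T=\bigl((\zeta^{-1})_-\bigr)^{-1}.\]
   Context: $\Bbbk$ is a field of characteristic $\neq2$. For a composition $\alpha=(a_1,\ldots,a_k)$, $\tilde\alpha=(a_k,\ldots,a_1)$ is its reversal. ${\mathcal{Q}Sym}$ is the graded connected Hopf algebra of quasi-symmetric functions over $\Bbbk$, with monomial basis $M_\alpha=\sum_{i_1<\cdots<i_k}x_{i_1}^{a_1}\cdots x_{i_k}^{a_k}$, fundamental basis $F_\alpha=\sum_{\beta\ge\alpha}M_\beta$ ($\beta\ge\alpha$: $\beta$ refines $\alpha$), ordinary product, coproduct $\Delta(M_\alpha)=\sum_{i=0}^kM_{(a_1,\ldots,a_i)}\otimes M_{(a_{i+1},\ldots,a_k)}$. Convolution $\rho\psi=m\circ(\rho\otimes\psi)\circ\Delta$; characters (algebra morphisms to $\Bbbk$) form a group under convolution, the inverse of $\varphi$ being denoted $\varphi^{-1}$. For a functional $\varphi$, $\bar\varphi(h)=(-1)^n\varphi(h)$ on homogeneous $h$ of degree $n$; $\varphi$ is even if $\bar\varphi=\varphi$ and odd if $\bar\varphi=\varphi^{-1}$. Every character $\varphi$ factors uniquely as $\varphi=\varphi_+\varphi_-$ with $\varphi_+$ an even character and $\varphi_-$ an odd character. $\zeta$ is the universal character $\zeta(f)=f(1,0,0,\ldots)$ (so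 $\zeta(F_\alpha)=1$ if $\alpha=()$ or $\alpha=(n)$, else $0$); $\zeta_\pm$ are its even and odd parts, and $(\zeta^{-1})_\pm$ are the even and odd parts of its convolution inverse $\zeta^{-1}$. *)

(* Linear functionals on QSym over a field K are represented
   by their values on the monomial basis: phi : seq nat -> K, phi alpha = phi(M_alpha).
   Only values on compositions (sequences of positive integers) matter. *)
From HB Require Import structures.
From mathcomp Require Import all_boot all_order all_algebra.
Set Implicit Arguments.
Unset Strict Implicit.
Unset Printing Implicit Defensive.
Import GRing.Theory.
Local Open Scope ring_scope.

Definition is_comp (a : seq nat) : bool := all (fun x => 0 < x)%N a.

(* quasi-shuffles (with multiplicity): M_a * M_b = \sum_(g <- qsh a b) M_g *)
Fixpoint qsh (a b : seq nat) {struct a} : seq (seq nat) :=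
  match a with
  | [::] => [:: b]
  | x :: a' =>
    let fix qsh_a (b : seq nat) : seq (seq nat) :=
      match b with
      | [::] => [:: x :: a']
      | y :: b' =>
          map (cons x) (qsh a' (y :: b'))
          ++ map (cons y) (qsh_a b')
          ++ map (cons (x + y)%N) (qsh a' b')
      end
    in qsh_a b
  end.

Fixpoint comps_aux (f n : nat) : seq (seq nat) :=
  match f with
  | 0 => if n == 0%N then [:: [::]] else [::]
  | f'.+1 => if n == 0%N then [:: [::]]
             else flatten [seq map (cons i) (comps_aux f' (n - i)) | i <- iota 1 n]
  end.
Definition comps (n : nat) : seq (seq nat) := comps_aux n n.

(* all compositions refining a (i.e. beta >= a in the paper's order) *)
Fixpoint refinements (a : seq nat) : seq (seq nat) :=
  match a with
  | [::] => [:: [::]]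
  | x :: a' => [seq c ++ r | c <- comps x, r <- refinements a']
  end.

Section Functionals.
Variable K : fieldType.
Implicit Types phi psi : seq nat -> K.

(* value of the functional phi on F_a = \sum_{b >= a} M_b *)
Definition Fval phi (a : seq nat) : K := \sum_(b <- refinements a) phi b.

(* the functional phi \o T, given on the fundamental basis:
   (phi \o T)(F_a) = phi(F_{rev a}).  [compT_eq phi psi] means phi \o T = psi. *)
Definition compT_eq phi psi : Prop :=
  forall a, is_comp a -> Fval phi (rev a) = Fval psi a.

Definition character phi : Prop :=
  phi [::] = 1 /\
  forall a b, is_comp a -> is_comp b -> phi a * phi b = \sum_(g <- qsh a b) phi g.

(* convolution, coproduct = deconcatenation on M *)
Definition conv phi psi (a : seq nat) : K :=
  \sum_(i < (size a).+1) phi (take i a) * psi (drop i a).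

(* convolution inverse: phi^{-1}(M_a) defined by (phi phi^{-1})(M_a) = eps(M_a) *)
Fixpoint cinv_aux phi (n : nat) (a : seq nat) : K :=
  match n with
  | 0 => (phi [::])^-1 * (a == [::])%:R
  | n'.+1 => (phi [::])^-1 *
      ((a == [::])%:R - \sum_(i < size a) phi (take i.+1 a) * cinv_aux phi n' (drop i.+1 a))
  end.
Definition cinv phi (a : seq nat) : K := cinv_aux phi (size a) a.

(* bar phi (h) = (-1)^n phi(h) for h homogeneous of degree n; deg M_a = |a| *)
Definition bar phi (a : seq nat) : K := (-1) ^+ (sumn a) * phi a.

Definition even_fun phi : Prop := forall a, is_comp a -> bar phi a = phi a.
Definition odd_fun phi : Prop := forall a, is_comp a -> bar phi a = cinv phi a.

Definition fun_eq phi psi : Prop := forall a, is_comp a -> phi a = psi a.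

(* universal character zeta(f) = f(1,0,0,...): zeta(M_a) = 1 iff a has <= 1 part *)
Definition zeta (a : seq nat) : K := (size a <= 1)%N%:R.

End Functionals.

(* The functionals phi with phi(M_()) = 1 form a group under convolution, on
   which phi |-> bar phi is an automorphism and phi |-> phi o rho, with
   rho(M_a) = M_(rev a), an anti-automorphism commuting with the bar.  In this
   group the even-odd factorization phi = phi_+ phi_- is unique: it gives
   (bar phi)^-1 phi = phi_- ^2, and an odd square root with value 1 at M_() is
   determined degree by degree since 2 is invertible.  Now
     zeta^-1 = zeta_+^-1 (zeta_+ zeta_-^-1 zeta_+^-1)
   and, as zeta o rho = zeta, also
     zeta^-1 = (zeta_+ o rho)^-1 (zeta_- o rho)^-1;
   both are even-odd factorizations, so zeta_+ o rho = zeta_+ and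
   zeta_- o rho = ((zeta^-1)_-)^-1.  Finally T = rho, because the refinements
   of rev a are the reversals of the refinements of a. *)

From mathcomp Require Import all_boot all_order all_algebra ring zify.
From Corelib Require Import Setoid Morphisms.
Set Implicit Arguments.
Unset Strict Implicit.
Unset Printing Implicit Defensive.
Import GRing.Theory.
Local Open Scope ring_scope.

Lemma is_comp_take i a : is_comp a -> is_comp (take i a).
Proof. by rewrite /is_comp -{1}(cat_take_drop i a) all_cat => /andP[]. Qed.

Lemma is_comp_drop i a : is_comp a -> is_comp (drop i a).
Proof. by rewrite /is_comp -{1}(cat_take_drop i a) all_cat => /andP[]. Qed.

Lemma is_comp_rev a : is_comp (rev a) = is_comp a.
Proof. exact: all_rev. Qed.

Lemma is_comp_sumn_eq0 b : is_comp b && (sumn b == 0%N) = (b == [::]).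
Proof. by case: b => [|[|x] b] //=; rewrite addSn andbF. Qed.

Lemma mem_comps_aux f n b : (n <= f)%N ->
  (b \in comps_aux f n) = is_comp b && (sumn b == n).
Proof.
elim: f n b => [|f IH] n b.
  by rewrite leqn0 => /eqP->; rewrite mem_seq1 is_comp_sumn_eq0.
move=> le_nf /=; case: eqP => [->|/eqP n_neq0]; first by rewrite mem_seq1 is_comp_sumn_eq0.
apply/allpairsPdep/andP => [[i [c [+ + ->]]]|[]].
  rewrite mem_iota => /andP[i_gt0 i_le_n].
  rewrite IH; last by lia.
  move=> /andP[comp_c /eqP sum_c]; split; first by rewrite /= i_gt0.
  by apply/eqP => /=; lia.
case: b => [_ /eqP/esym/eqP|x c]; first by rewrite (negbTE n_neq0).
move=> /= /andP[x_gt0 comp_c] /eqP sum_xc; exists x, c.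
rewrite mem_iota IH ?comp_c; last by lia.
by split=> //; [lia | apply/eqP; lia].
Qed.

Lemma mem_comps n b : (b \in comps n) = is_comp b && (sumn b == n).
Proof. exact: mem_comps_aux. Qed.

Lemma uniq_comps_aux f n : uniq (comps_aux f n).
Proof.
elim: f n => [|f IH] n /=; first by case: eqP.
case: eqP => // _; apply: allpairs_uniq_dep => //; first exact: iota_uniq.
by move=> [x c] [y d] _ _ /= [-> ->].
Qed.

Lemma perm_comps_rev n : perm_eq (map rev (comps n)) (comps n).
Proof.
apply: uniq_perm; last 1 first.
- move=> b; rewrite -{1}(revK b) (mem_map (can_inj revK)).
  by rewrite !mem_comps is_comp_rev sumn_rev.
- by rewrite (map_inj_uniq (can_inj revK)) uniq_comps_aux.
- exact: uniq_comps_aux.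
Qed.

Lemma is_comp_refinements a b : b \in refinements a -> is_comp b.
Proof.
elim: a b => [|x a IH] b /=; first by rewrite inE => /eqP->.
case/allpairsPdep=> [c [r [+ /IH comp_r ->]]].
by rewrite mem_comps /is_comp all_cat => /andP[-> _].
Qed.

Section RefinementSums.
Variables (R : Type) (idx : R) (op : Monoid.com_law idx).

Lemma big_refinements_cat (F : seq nat -> R) a a' :
  \big[op/idx]_(b <- refinements (a ++ a')) F b =
  \big[op/idx]_(c <- refinements a) \big[op/idx]_(r <- refinements a') F (c ++ r).
Proof.
elim: a F => [|x a IH] F /=; first by rewrite big_seq1.
rewrite !big_allpairs_dep; apply: eq_bigr => c _.
by rewrite IH; apply: eq_bigr => c' _; apply: eq_bigr => r _; rewrite catA.
Qed.

Lemma big_comps_rev (F : seq nat -> R) n :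
  \big[op/idx]_(c <- comps n) F (rev c) = \big[op/idx]_(c <- comps n) F c.
Proof. by rewrite -(big_map rev xpredT); apply: perm_big; apply: perm_comps_rev. Qed.

Lemma big_refinements1 (F : seq nat -> R) x :
  \big[op/idx]_(b <- refinements [:: x]) F b = \big[op/idx]_(c <- comps x) F c.
Proof. by rewrite big_allpairs_dep; apply: eq_bigr => c _; rewrite big_seq1 cats0. Qed.

Lemma big_refinements_rev (F : seq nat -> R) a :
  \big[op/idx]_(b <- refinements (rev a)) F b =
  \big[op/idx]_(b <- refinements a) F (rev b).
Proof.
elim: a F => [|x a IH] F; first by rewrite /= !big_seq1.
rewrite rev_cons -cats1 big_refinements_cat IH exchange_big big_refinements1.
rewrite -[LHS]big_comps_rev big_allpairs_dep; apply: eq_bigr => c _.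
by apply: eq_bigr => d _; rewrite rev_cat.
Qed.
End RefinementSums.

Section Convolution.
Variable K : fieldType.
Implicit Types f g h p q : seq nat -> K.

Definition counit (a : seq nat) : K := (a == [::])%:R.

Definition revf f (a : seq nat) : K := f (rev a).

(* Only the values at compositions matter, so [fun_eq] is the equality of
   functionals; the instances below let [rewrite] work along it. *)
#[global] Instance fun_eq_Equivalence : Equivalence (@fun_eq K).
Proof.
split; first by move=> f a.
- by move=> f g fg a ca; rewrite fg.
- by move=> f g h fg gh a ca; rewrite fg ?gh.
Qed.

Lemma eq_conv f f' g g' : f =1 f' -> g =1 g' -> conv f g =1 conv f' g'.
Proof. by move=> ff' gg' a; apply: eq_bigr => i _; rewrite ff' gg'. Qed.

#[global] Instance conv_Proper :
  Proper (@fun_eq K ==> @fun_eq K ==> @fun_eq K) (@conv K).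
Proof.
move=> f f' ff' g g' gg' a ca; apply: eq_bigr => i _.
by rewrite ff' ?gg' ?is_comp_take ?is_comp_drop.
Qed.

Lemma conv_nil f g : conv f g [::] = f [::] * g [::].
Proof. by rewrite /conv big_ord_recl big_ord0 addr0. Qed.

Lemma conv_cons f g x a :
  conv f g (x :: a) = f [::] * g (x :: a) + conv (fun b => f (x :: b)) g a.
Proof. by rewrite /conv big_ord_recl. Qed.

Lemma convDl c f f' g a :
  conv (fun b => c * f b + f' b) g a = c * conv f g a + conv f' g a.
Proof.
by rewrite /conv mulr_sumr -big_split; apply: eq_bigr => i _; rewrite mulrDl mulrA.
Qed.

Lemma convA f g h : fun_eq (conv (conv f g) h) (conv f (conv g h)).
Proof.
move=> a _; elim: a f g h => [|x a IH] f g h; first by rewrite !conv_nil mulrA.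
rewrite !conv_cons conv_nil (eq_conv (conv_cons f g x) (frefl h)) convDl IH.
ring.
Qed.

Lemma conv_counitl f : fun_eq (conv counit f) f.
Proof.
move=> a _; rewrite /conv big_ord_recl /counit take0 drop0 eqxx mul1r big1 ?addr0 //.
by case: a => [[]|x a i] //=; rewrite mul0r.
Qed.

Lemma conv_counitr f : fun_eq (conv f counit) f.
Proof.
move=> a _; rewrite /conv big_ord_recr /= drop_size take_size /counit eqxx mulr1.
rewrite big1 ?add0r // => -[i lt_i_a] _ /=.
by rewrite -size_eq0 size_drop subn_eq0 leqNgt lt_i_a mulr0.
Qed.

Lemma cinv_aux_fuel f n m a : (size a <= n)%N -> (size a <= m)%N ->
  cinv_aux f n a = cinv_aux f m a.
Proof.
elim: n m a => [|n IH] [|m] [|x a] //=; rewrite ?big_ord0 ?subr0 // => le_an le_am.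
congr (_ * (_ - _)); apply: eq_bigr => i _; congr (_ * _).
by apply: IH; rewrite size_drop /=; lia.
Qed.

Lemma cinvE f a : cinv f a = (f [::])^-1 *
  (counit a - \sum_(i < size a) f (take i.+1 a) * cinv f (drop i.+1 a)).
Proof.
rewrite /cinv; case: a => [|x a] /=; first by rewrite big_ord0 subr0.
congr (_ * (_ - _)); apply: eq_bigr => i _; congr (_ * _).
by apply: cinv_aux_fuel; rewrite size_drop /=; lia.
Qed.

Lemma cinv_nil f : cinv f [::] = (f [::])^-1.
Proof. by rewrite cinvE big_ord0 subr0 mulr1. Qed.

#[global] Instance cinv_Proper : Proper (@fun_eq K ==> @fun_eq K) (@cinv K).
Proof.
move=> f f' ff' a; rewrite /cinv; move: (size a) => n; elim: n a => [|n IH] a ca /=.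
  by rewrite (ff' [::]).
rewrite (ff' [::]) //; congr (_ * (_ - _)); apply: eq_bigr => i _.
by rewrite (ff' (take _ _)) ?IH ?is_comp_take ?is_comp_drop.
Qed.

Lemma cinv_nil_neq0 f : f [::] != 0 -> cinv f [::] != 0.
Proof. by rewrite cinv_nil invr_eq0. Qed.

Lemma convfV f : f [::] != 0 -> fun_eq (conv f (cinv f)) counit.
Proof.
move=> f_nil a _; rewrite /conv big_ord_recl /= take0 drop0 [cinv f a]cinvE.
by rewrite mulrA mulfV // mul1r subrK.
Qed.

Lemma convVf f : f [::] != 0 -> fun_eq (conv (cinv f) f) counit.
Proof.
move=> f_nil; have cf_nil := cinv_nil_neq0 f_nil.
have f_cinvK : fun_eq f (cinv (cinv f)).
  rewrite -[X in fun_eq X _]conv_counitr -(convfV cf_nil) -convA.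
  by rewrite convfV // conv_counitl.
by rewrite [X in conv _ X]f_cinvK convfV.
Qed.

Lemma cinv_unique f g : f [::] != 0 -> fun_eq (conv f g) counit -> fun_eq (cinv f) g.
Proof.
move=> f_nil fg; rewrite -[X in fun_eq X _]conv_counitr -fg -convA.
by rewrite convVf // conv_counitl.
Qed.

Lemma cinvK f : f [::] != 0 -> fun_eq (cinv (cinv f)) f.
Proof. by move=> f_nil; apply: cinv_unique (convVf _) => //; apply: cinv_nil_neq0. Qed.

Lemma cinvM f g : f [::] != 0 -> g [::] != 0 ->
  fun_eq (cinv (conv f g)) (conv (cinv g) (cinv f)).
Proof.
move=> f_nil g_nil; apply: cinv_unique; first by rewrite conv_nil mulf_neq0.
by rewrite convA -[X in conv f X]convA convfV // conv_counitl convfV.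
Qed.

#[global] Instance bar_Proper : Proper (@fun_eq K ==> @fun_eq K) (@bar K).
Proof. by move=> f f' ff' a ca; rewrite /bar ff'. Qed.

Lemma bar_nil f : bar f [::] = f [::].
Proof. by rewrite /bar mul1r. Qed.

Lemma bar_conv f g : fun_eq (bar (conv f g)) (conv (bar f) (bar g)).
Proof.
move=> a _; rewrite /bar /conv mulr_sumr; apply: eq_bigr => i _.
rewrite -{1}(cat_take_drop i a) sumn_cat exprD; ring.
Qed.

Lemma bar_counit : fun_eq (bar counit) counit.
Proof. by case=> [|x a] _; rewrite /bar /counit /= ?mul1r ?mulr0. Qed.

Lemma bar_cinv f : f [::] != 0 -> fun_eq (bar (cinv f)) (cinv (bar f)).
Proof.
move=> f_nil; symmetry; apply: cinv_unique; first by rewrite bar_nil.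
by rewrite -bar_conv convfV // bar_counit.
Qed.

#[global] Instance revf_Proper : Proper (@fun_eq K ==> @fun_eq K) (@revf).
Proof. by move=> f f' ff' a ca; rewrite /revf ff' ?is_comp_rev. Qed.

Lemma revf_conv f g : fun_eq (revf (conv f g)) (conv (revf g) (revf f)).
Proof.
move=> a _; rewrite /revf /conv size_rev (reindex_inj rev_ord_inj) /=.
apply: eq_bigr => -[i lt_i_a] _ /=; rewrite take_rev drop_rev mulrC.
by congr (g (rev (take _ _)) * f (rev (drop _ _))); lia.
Qed.

Lemma revf_counit : fun_eq (revf counit) counit.
Proof. by move=> a _; rewrite /revf /counit -size_eq0 size_rev size_eq0. Qed.

Lemma revf_cinv f : f [::] != 0 -> fun_eq (revf (cinv f)) (cinv (revf f)).
Proof.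
move=> f_nil; symmetry; apply: cinv_unique => //.
by rewrite -revf_conv convVf // revf_counit.
Qed.

Lemma revf_bar f : fun_eq (revf (bar f)) (bar (revf f)).
Proof. by move=> a _; rewrite /revf /bar sumn_rev. Qed.

Lemma even_funE f : even_fun f = fun_eq (bar f) f.
Proof. by []. Qed.

Lemma odd_funE f : odd_fun f = fun_eq (bar f) (cinv f).
Proof. by []. Qed.

Lemma even_cinv f : f [::] != 0 -> even_fun f -> even_fun (cinv f).
Proof. by rewrite !even_funE => f_nil f_even; rewrite bar_cinv // f_even. Qed.

Lemma even_revf f : even_fun f -> even_fun (revf f).
Proof. by rewrite !even_funE => f_even; rewrite -revf_bar f_even. Qed.

Lemma odd_cinv f : f [::] != 0 -> odd_fun f -> odd_fun (cinv f).
Proof. by rewrite !odd_funE => f_nil f_odd; rewrite bar_cinv // f_odd. Qed.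

Lemma odd_revf f : f [::] != 0 -> odd_fun f -> odd_fun (revf f).
Proof. by rewrite !odd_funE => f_nil f_odd; rewrite -revf_bar f_odd revf_cinv. Qed.

Lemma odd_conjg p q : p [::] != 0 -> q [::] != 0 -> even_fun p -> odd_fun q ->
  odd_fun (conv (conv p q) (cinv p)).
Proof.
rewrite !odd_funE even_funE => p_nil q_nil p_even q_odd.
rewrite !bar_conv bar_cinv // p_even q_odd.
have pq_nil : conv p q [::] != 0 by rewrite conv_nil mulf_neq0.
by rewrite cinvM ?cinv_nil_neq0 // cinvK // cinvM // convA.
Qed.

Lemma cinv_bar_conv_even_odd p q : p [::] != 0 -> q [::] != 0 ->
  even_fun p -> odd_fun q ->
  fun_eq (conv (cinv (bar (conv p q))) (conv p q)) (conv q q).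
Proof.
rewrite !odd_funE even_funE => p_nil q_nil p_even q_odd.
rewrite bar_conv p_even q_odd cinvM ?cinv_nil_neq0 // cinvK //.
by rewrite convA -[X in conv q X]convA convVf // conv_counitl.
Qed.

Lemma conv_ends f g a n : size a = n.+1 -> conv f g a =
  f [::] * g a + f a * g [::] + \sum_(i < n) f (take i.+1 a) * g (drop i.+1 a).
Proof.
move=> size_a; rewrite /conv size_a big_ord_recl big_ord_recr /= take0 drop0.
by rewrite /bump /= !add1n -size_a take_size drop_size addrA addrAC.
Qed.

Lemma conv_sqr_inj q q' : (2%:R : K) != 0 -> q [::] = 1 -> q' [::] = 1 ->
  fun_eq (conv q q) (conv q' q') -> fun_eq q q'.
Proof.
(* At a nonempty composition [a], [q * q] is [2 q(a)] plus products of values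
   of [q] at strictly shorter compositions. *)
move=> two_neq0 q_nil q'_nil qq' a; have [n] := ubnP (size a).
elim: n a => // n IH a lt_a_n ca; case size_a: (size a) => [|m].
  by move/size0nil: size_a => ->; rewrite q_nil q'_nil.
have := qq' a ca; rewrite !(conv_ends _ _ size_a) q_nil q'_nil.
have -> : \sum_(i < m) q (take i.+1 a) * q (drop i.+1 a) =
          \sum_(i < m) q' (take i.+1 a) * q' (drop i.+1 a).
  apply: eq_bigr => -[i lt_i_m] _ /=.
  rewrite !IH ?is_comp_take ?is_comp_drop ?size_take ?size_drop ?size_a //; try lia.
  by case: ifP; lia.
move/addIr; rewrite !mul1r !mulr1 => double_eq.
by apply: (mulfI two_neq0); rewrite !mulr_natl !mulr2n.
Qed.

Definition even_odd_factorization c p q : Prop :=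
  [/\ p [::] = 1, q [::] = 1, even_fun p, odd_fun q & fun_eq c (conv p q)].

Lemma even_odd_factor_unique c p q p' q' : (2%:R : K) != 0 ->
  even_odd_factorization c p q -> even_odd_factorization c p' q' ->
  fun_eq p p' /\ fun_eq q q'.
Proof.
move=> two_neq0 [p_nil q_nil p_even q_odd c_pq] [p'_nil q'_nil p'_even q'_odd c_pq'].
have nz1 := oner_neq0 K.
have qq' : fun_eq q q'.
  apply: conv_sqr_inj => //.
  rewrite -(@cinv_bar_conv_even_odd p q) ?p_nil ?q_nil // -c_pq c_pq'.
  by rewrite cinv_bar_conv_even_odd ?p'_nil ?q'_nil.
split=> //.
rewrite -[X in fun_eq X _]conv_counitr -(@convfV q) ?q_nil // -convA -c_pq c_pq' qq'.
by rewrite convA convfV ?q'_nil // conv_counitr.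
Qed.

Lemma even_odd_factorization_cinv c p q : even_odd_factorization c p q ->
  even_odd_factorization (cinv c) (cinv p) (conv (conv p (cinv q)) (cinv p)).
Proof.
move=> [p_nil q_nil p_even q_odd c_pq].
have p_neq0 : p [::] != 0 by rewrite p_nil oner_neq0.
have q_neq0 : q [::] != 0 by rewrite q_nil oner_neq0.
have cq_neq0 := cinv_nil_neq0 q_neq0.
split.
- by rewrite cinv_nil p_nil invr1.
- by rewrite !conv_nil !cinv_nil p_nil q_nil invr1 !mulr1.
- exact: even_cinv.
- by apply: odd_conjg => //; apply: odd_cinv.
- by rewrite c_pq cinvM // -!convA convVf // conv_counitl.
Qed.

Lemma even_odd_factorization_cinv_revf c p q : even_odd_factorization c p q ->
  even_odd_factorization (cinv (revf c)) (cinv (revf p)) (cinv (revf q)).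
Proof.
move=> [p_nil q_nil p_even q_odd c_pq].
have rp_neq0 : revf p [::] != 0 by rewrite /revf p_nil oner_neq0.
have rq_neq0 : revf q [::] != 0 by rewrite /revf q_nil oner_neq0.
split.
- by rewrite cinv_nil /revf p_nil invr1.
- by rewrite cinv_nil /revf q_nil invr1.
- exact/even_cinv/even_revf.
- by apply/odd_cinv/odd_revf; rewrite ?q_nil ?oner_neq0.
- by rewrite c_pq revf_conv cinvM.
Qed.

Lemma revf_zeta : fun_eq (revf (zeta K)) (zeta K).
Proof. by move=> a _; rewrite /revf /zeta size_rev. Qed.

Lemma compT_eq_revf f g : fun_eq (revf f) g -> compT_eq f g.
Proof.
move=> fg a _; rewrite /Fval big_refinements_rev.
by apply: eq_big_seq => b /is_comp_refinements; apply: fg.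
Qed.
End Convolution.

Theorem proposition8p2 (K : fieldType) (hK : (2%:R : K) != 0)
  (zp zm yp ym : seq nat -> K) :
  character zp -> even_fun zp -> character zm -> odd_fun zm ->
  fun_eq (@zeta K) (conv zp zm) ->
  character yp -> even_fun yp -> character ym -> odd_fun ym ->
  fun_eq (cinv (@zeta K)) (conv yp ym) ->
  compT_eq zp zp /\ compT_eq zm (cinv ym).
Proof.
move=> [zp_nil _] zp_even [zm_nil _] zm_odd zeta_eq.
move=> [yp_nil _] yp_even [ym_nil _] ym_odd cinv_zeta_eq.
have zeta_fact : even_odd_factorization (zeta K) zp zm by [].
have cinv_zeta_fact : even_odd_factorization (cinv (zeta K)) yp ym by [].
have cinv_revf_zeta_fact : even_odd_factorization (cinv (revf (zeta K))) yp ym.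
  by split; rewrite // revf_zeta.
have [yp_eq _] := even_odd_factor_unique hK cinv_zeta_fact (even_odd_factorization_cinv zeta_fact).
have [yp_rev ym_rev] := even_odd_factor_unique hK cinv_revf_zeta_fact
  (even_odd_factorization_cinv_revf zeta_fact).
have rzp_neq0 : revf zp [::] != 0 by rewrite /revf zp_nil oner_neq0.
have rzm_neq0 : revf zm [::] != 0 by rewrite /revf zm_nil oner_neq0.
split; apply: compT_eq_revf.
  by rewrite -(cinvK rzp_neq0) -yp_rev yp_eq cinvK // zp_nil oner_neq0.
by rewrite -(cinvK rzm_neq0) -ym_rev.
Qed.
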